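(* Let $A$ be a finite set of options containing a default option $0$, and consider a finite nonempty collection of $V$ ballots as described in the context, with associated Llull matrix $v$. Let $C\subseteq A\setminus\{0\}$ be a set of clones. If some $x\in C$ is a path-revised approval choice of $v$, then every element of $C$ is a path-revised approval choice of $v$.
   Context: Each of the $V$ voters casts a ballot which, for each unordered pair $\{x,y\}$ of distinct options, expresses exactly one of: $x$ preferred to $y$; $y$ preferred to $x$; $x$ and $y$ ranked equally; no comparison. The Llull matrix is $v_{xy}=(\#\{\text{voters preferring }x\text{ to }y\}+\tfrac12\#\{\text{voters ranking }x,y\text{ equally}\})/V$ for distinct $x,y$. A set $C\subseteq A\setminus\{0\}$ is a set of clones if for every voter and every $y\in A\setminus C$ (including $y=0$), the relation expressed by that voter between $x$ and $y$ (one of the four possibilities above) is the same for all $x\in C$. Path scores: $v^*_{xy}=\max\min(v_{x_0x_1},\dots,v_{x_{m-1}x_m})$ over all paths $x_0\dots x_m$ ($m\ge1$, $x_0=x$, $x_m=y$, $x_i$ pairwise distinct). For $z\in A$ put $D(z)=v^*_{z0}-v^*_{0z}$ if $z\ne0$ and $D(0)=0$. An option $x$ is a path-revised approval choice if $D(x)\ge D(y)$ for all $y\in A\setminus\{x\}$. *)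

From HB Require Import structures.
From mathcomp Require Import all_boot all_order all_algebra.
Set Implicit Arguments. Unset Strict Implicit. Unset Printing Implicit Defensive.
Import Order.TTheory GRing.Theory Num.Theory.
Local Open Scope ring_scope.

(* What a ballot expresses about an ordered pair (x,y) of distinct options. *)
Inductive cmp := Pref (* x preferred to y *) | Dispref (* y preferred to x *)
               | Tie | NoCmp .

Definition cmp_flip (c : cmp) : cmp :=
  match c with Pref => Dispref | Dispref => Pref | Tie => Tie | NoCmp => NoCmp end.

Definition cmp_eqb (c d : cmp) : bool :=
  match c, d with
  | Pref, Pref | Dispref, Dispref | Tie, Tie | NoCmp, NoCmp => true
  | _, _ => false end.

Definition ballot (A : finType) := A -> A -> cmp.

Definition wf_ballot (A : finType) (b : ballot A) : Prop :=
  forall x y : A, x != y -> b y x = cmp_flip (b x y).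

Definition llull (A : finType) (V : nat) (bs : 'I_V -> ballot A) (x y : A) : rat :=
  ((#|[set i | cmp_eqb (bs i x y) Pref]|)%:R
   + (#|[set i | cmp_eqb (bs i x y) Tie]|)%:R / 2) / V%:R.

Definition clones (A : finType) (o0 : A) (V : nat) (bs : 'I_V -> ballot A)
  (C : {set A}) : Prop :=
  o0 \notin C /\
  forall (i : 'I_V) (y : A), y \notin C ->
    forall x1 x2 : A, x1 \in C -> x2 \in C -> bs i x1 y = bs i x2 y.

(* minimum of v along the path x :: t (t nonempty; values of v lie in [0,1]) *)
Definition path_min (A : finType) (v : A -> A -> rat) (x : A) (t : seq A) : rat :=
  \big[Num.min/1]_(e <- zip (x :: t) t) v e.1 e.2.

(* path score: max over simple paths x = x_0, x_1, ..., x_m = y, m >= 1,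
   pairwise distinct vertices; t = [x_1; ...; x_m] has length m <= #|A|. *)
Definition path_score (A : finType) (v : A -> A -> rat) (x y : A) : rat :=
  \big[Num.max/0]_(m < #|A|)
     \big[Num.max/0]_(t : (m.+1).-tuple A | uniq (x :: t) && (last x t == y))
        path_min v x t.

Definition Dscore (A : finType) (o0 : A) (v : A -> A -> rat) (z : A) : rat :=
  if z == o0 then 0 else path_score v z o0 - path_score v o0 z.

Definition path_revised_approval_choice (A : finType) (o0 : A)
  (v : A -> A -> rat) (x : A) : Prop :=
  forall y : A, y != x -> Dscore o0 v y <= Dscore o0 v x.

(* Clones are interchangeable in the Llull matrix: each has the same score against every
   non-clone, in both directions.  Hence, in a best path between a clone and an option
   outside the clone set, the segment inside the clone set can be cut out (to 0) or
   replaced by a single clone (from 0) without lowering the path minimum.  All clones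
   therefore have the same path scores to and from 0, hence the same D value, and if one
   of them maximises D they all do. *)
From HB Require Import structures.
From mathcomp Require Import all_boot all_order all_algebra.
Set Implicit Arguments. Unset Strict Implicit. Unset Printing Implicit Defensive.
Import Order.TTheory GRing.Theory Num.Theory.
Local Open Scope ring_scope.

Lemma llull_clone_row (A : finType) (o0 : A) (V : nat) (bs : 'I_V -> ballot A)
    (C : {set A}) :
  clones o0 bs C ->
  forall x1 x2 y, x1 \in C -> x2 \in C -> y \notin C -> llull bs x1 y = llull bs x2 y.
Proof.
move=> [_ cl] x1 x2 y x1C x2C yNC.
have cntE c : [set i | cmp_eqb (bs i x1 y) c] = [set i | cmp_eqb (bs i x2 y) c].
  by apply/setP => i; rewrite !inE (cl i y yNC x1 x2 x1C x2C).
by rewrite /llull !cntE.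
Qed.

Lemma llull_clone_col (A : finType) (o0 : A) (V : nat) (bs : 'I_V -> ballot A)
    (C : {set A}) :
  (forall i, wf_ballot (bs i)) -> clones o0 bs C ->
  forall x1 x2 y, x1 \in C -> x2 \in C -> y \notin C -> llull bs y x1 = llull bs y x2.
Proof.
move=> wf [_ cl] x1 x2 y x1C x2C yNC.
have neq x : x \in C -> x != y by apply: contraTneq => ->.
have cntE c : [set i | cmp_eqb (bs i y x1) c] = [set i | cmp_eqb (bs i y x2) c].
  apply/setP => i.
  by rewrite !inE (wf i x1 y (neq _ x1C)) (wf i x2 y (neq _ x2C)) (cl i y yNC x1 x2 x1C x2C).
by rewrite /llull !cntE.
Qed.

Section PathScores.

Variables (A : finType) (v : A -> A -> rat).

Lemma path_min_nil x : path_min v x [::] = 1.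
Proof. by rewrite /path_min big_nil. Qed.

Lemma path_min_cons x w t :
  path_min v x (w :: t) = Num.min (v x w) (path_min v w t).
Proof. by rewrite /path_min /= big_cons. Qed.

Lemma path_min_le1 x t : path_min v x t <= 1.
Proof. exact: bigmin_le_id. Qed.

Lemma path_score_ge0 x y : 0 <= path_score v x y.
Proof. exact: bigmax_ge_id. Qed.

Lemma path_score_ge x y t :
  t != [::] -> uniq (x :: t) -> last x t = y -> path_min v x t <= path_score v x y.
Proof.
move=> tn0 xtU xtL.
have sz_lt : ((size t).-1 < #|A|)%N.
  rewrite prednK ?lt0n ?size_eq0 //; apply: leq_trans (max_card (mem (x :: t))).
  by rewrite (card_uniqP xtU).
have szE : size t == (size t).-1.+1 by rewrite prednK // lt0n size_eq0.
apply: le_trans (le_bigmax_cond _ (j := Ordinal sz_lt) _ isT).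
apply: le_trans (le_bigmax_cond _ (j := Tuple szE) _ _) => //=.
rewrite xtL eqxx andbT; exact: xtU.
Qed.

Lemma path_score_le x y x' y' :
  (forall t, t != [::] -> uniq (x :: t) -> last x t = y ->
     exists2 t', [/\ t' != [::], uniq (x' :: t') & last x' t' = y'] &
                 path_min v x t <= path_min v x' t') ->
  path_score v x y <= path_score v x' y'.
Proof.
move=> better; apply: bigmax_le => [|m _]; first exact: path_score_ge0.
apply: bigmax_le => [|t /andP[tU /eqP tL]]; first exact: path_score_ge0.
have tn0 : (t : seq A) != [::] by rewrite -size_eq0 size_tuple.
have [t' [t'n0 t'U t'L] le_t'] := better t tn0 tU tL.
by apply: le_trans le_t' _; apply: path_score_ge.
Qed.

Variables (C : {set A}).
Hypothesis clone_row : forall x1 x2 y, x1 \in C -> x2 \in C -> y \notin C -> v x1 y = v x2 y.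
Hypothesis clone_col : forall x1 x2 y, x1 \in C -> x2 \in C -> y \notin C -> v y x1 = v y x2.

(* The witness is the part of the path after its last visit to [C]. *)
Lemma path_min_exit_clones y t x :
  y \notin C -> uniq (x :: t) -> last x t = y -> has (mem C) (x :: t) ->
  exists t', [/\ t' != [::], all [predC C] t', uniq t', last y t' = y &
    forall x2, x2 \in C -> path_min v x t <= path_min v x2 t'].
Proof.
move=> yNC; elim: t x => [|w t IH] x; first by move=> _ /= ->; rewrite (negbTE yNC).
case/andP=> _ wtU wtL xwtC; have [wtC | wtNC] := boolP (has (mem C) (w :: t)).
  have [t' [t'n0 t'NC t'U t'L le_t']] := IH w wtU wtL wtC.
  exists t'; split=> // x2 x2C.
  by rewrite path_min_cons ge_min le_t' ?orbT.
have xC : x \in C by case/orP: xwtC => // wtC; case/negP: wtNC.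
exists (w :: t); split=> //; first by rewrite all_predC.
move=> x2 x2C; rewrite !path_min_cons (clone_row xC x2C) //.
by apply: contra wtNC => wC; rewrite /= wC.
Qed.

(* The witness is the part of the path before its first visit to [C], followed by [x2]. *)
Lemma path_min_enter_clones t x :
  x \notin C -> uniq (x :: t) -> last x t \in C ->
  exists u, [/\ all [predC C] u, uniq (x :: u), {subset u <= t} &
    forall x2, x2 \in C -> path_min v x t <= path_min v x (rcons u x2)].
Proof.
elim: t x => [|w t IH] x xNC; first by move=> _ /= xC; rewrite xC in xNC.
case/andP=> xNwt wtU wtL; have [wC | wNC] := boolP (w \in C).
  exists [::]; split=> // x2 x2C.
  rewrite !path_min_cons path_min_nil (clone_col wC x2C xNC) le_min ge_min lexx /=.
  by rewrite ge_min path_min_le1 orbT.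
have [u [uNC wuU uSt le_u]] := IH w wNC wtU wtL.
have wuSwt : {subset w :: u <= w :: t}.
  by move=> z; rewrite !inE => /orP[-> // | /uSt ->]; rewrite orbT.
exists (w :: u); split=> //.
- by rewrite /= wNC.
- by rewrite cons_uniq wuU andbT; apply: contra xNwt => /wuSwt.
move=> x2 x2C; rewrite !path_min_cons le_min ge_min lexx /=.
by rewrite ge_min le_u ?orbT.
Qed.

Lemma path_score_clones_to y x1 x2 :
  y \notin C -> x1 \in C -> x2 \in C -> path_score v x1 y = path_score v x2 y.
Proof.
move=> yNC; suff le_ps a b : a \in C -> b \in C -> path_score v a y <= path_score v b y.
  by move=> x1C x2C; apply/le_anti; rewrite !le_ps.
move=> aC bC; apply: path_score_le => t _ atU atL.
have [|t' [t'n0 t'NC t'U t'L le_t']] := path_min_exit_clones yNC atU atL; first by rewrite /= aC.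
exists t'; last exact: le_t'.
split=> //; first by rewrite /= t'U andbT; apply: contraL bC => /(allP t'NC).
by case: t' {t'NC t'U le_t'} t'n0 t'L.
Qed.

Lemma path_score_clones_from y x1 x2 :
  y \notin C -> x1 \in C -> x2 \in C -> path_score v y x1 = path_score v y x2.
Proof.
move=> yNC; suff le_ps a b : a \in C -> b \in C -> path_score v y a <= path_score v y b.
  by move=> x1C x2C; apply/le_anti; rewrite !le_ps.
move=> aC bC; apply: path_score_le => t _ ytU ytL.
have [|u [uNC yuU _ le_u]] := path_min_enter_clones yNC ytU; first by rewrite ytL.
exists (rcons u b); last exact: le_u.
split; [by rewrite -size_eq0 size_rcons | | by rewrite last_rcons].
rewrite -rcons_cons rcons_uniq yuU andbT inE negb_or; apply/andP; split.
- by apply: contraTneq bC => ->.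
- by apply: contraL bC => /(allP uNC).
Qed.

Lemma Dscore_clones o0 x1 x2 :
  o0 \notin C -> x1 \in C -> x2 \in C -> Dscore o0 v x1 = Dscore o0 v x2.
Proof.
move=> o0NC x1C x2C; have neq0 x : x \in C -> (x == o0) = false.
  by move=> xC; apply/negbTE; apply: contraTneq xC => ->.
by rewrite /Dscore !neq0 // (path_score_clones_to o0NC x1C x2C)
  (path_score_clones_from o0NC x1C x2C).
Qed.

End PathScores.

Theorem theorem3p4 (A : finType) (o0 : A) (V : nat) (bs : 'I_V -> ballot A)
  (C : {set A}) :
  (0 < V)%N ->
  (forall i, wf_ballot (bs i)) ->
  clones o0 bs C ->
  (exists2 x, x \in C & path_revised_approval_choice o0 (llull bs) x) ->
  forall z, z \in C -> path_revised_approval_choice o0 (llull bs) z.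
Proof.
move=> _ wf cl [x xC x_best] z zC y _.
rewrite (Dscore_clones (llull_clone_row cl) (llull_clone_col wf cl) cl.1 zC xC).
by have [-> | yNx] := eqVneq y x; [exact: lexx | exact: x_best].
Qed.
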